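(* $R_{3,3}(W_3\otimes W_3)=8$.
   Context: Identify $S^3\mathbb{C}^2$ with binary cubic forms in a basis $\{x,y\}$; $W_3=x^2y$. The partially symmetric rank $R_{3,3}(T)$ of $T\in S^3\mathbb{C}^2\otimes S^3\mathbb{C}^2$ is the minimal $r$ with $T=\sum_{i=1}^r v_{i,1}^{\otimes 3}\otimes v_{i,2}^{\otimes 3}$, $v_{i,j}\in\mathbb{C}^2$. *)

From HB Require Import structures.
From mathcomp Require Import all_boot all_order all_algebra.
From mathcomp Require Import complex.
From mathcomp Require Import Rstruct.
Set Implicit Arguments. Unset Strict Implicit. Unset Printing Implicit Defensive.
Import Order.TTheory GRing.Theory Num.Theory.
Local Open Scope ring_scope.

Definition C : Type := complex Rdefinitions.R.

(* Vectors of C^2 in the basis {x, y}: index 0 is x, index 1 is y. *)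
Definition vec2 := 'I_2 -> C.

(* A tensor in C^2 (x)6 = (C^2)^(x3) (x) (C^2)^(x3), via its coordinates;
   S^3 C^2 (x) S^3 C^2 is the subspace of tensors symmetric in the first
   three and in the last three indices. *)
Definition tensor33 :=
  'I_2 -> 'I_2 -> 'I_2 -> 'I_2 -> 'I_2 -> 'I_2 -> C.

Definition pure33 (v w : vec2) : tensor33 :=
  fun i1 i2 i3 j1 j2 j3 => v i1 * v i2 * v i3 * (w j1 * w j2 * w j3).

Definition has_ps_decomp (T : tensor33) (r : nat) : Prop :=
  exists (v w : 'I_r -> vec2),
    forall i1 i2 i3 j1 j2 j3,
      T i1 i2 i3 j1 j2 j3 = \sum_(k < r) pure33 (v k) (w k) i1 i2 i3 j1 j2 j3.

Definition ps_rank_is (T : tensor33) (r : nat) : Prop :=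
  has_ps_decomp T r /\ (forall s, has_ps_decomp T s -> (r <= s)%N).

(* The symmetric tensor in S^3 C^2 corresponding to the binary cubic
   W_3 = x^2 y, under the identification (a x + b y)^3 <-> v^{(x)3},
   v = (a, b): it is (e_x e_x e_y + e_x e_y e_x + e_y e_x e_x)/3. *)
Definition W3 (i1 i2 i3 : 'I_2) : C :=
  if (i1 + i2 + i3 == 1)%N then 3%:R^-1 else 0.

Definition W3W3 : tensor33 :=
  fun i1 i2 i3 j1 j2 j3 => W3 i1 i2 i3 * W3 j1 j2 j3.

From HB Require Import structures.
From mathcomp Require Import all_boot all_order all_algebra.
From mathcomp Require Import complex Rstruct ring zify.
Set Implicit Arguments. Unset Strict Implicit. Unset Printing Implicit Defensive.
Import Order.TTheory GRing.Theory Num.Theory.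
Local Open Scope ring_scope.

(** A decomposition of [W_3 ⊗ W_3] into [r] terms [a_k^(⊗3) ⊗ b_k^(⊗3)] means
   [\sum_k p(a_k) q(b_k) = p_2 q_2 / 9] for all binary cubics [p], [q], where [p_2]
   is the coefficient of [x^2 y]; over any field, no seven pairs [(a_k, b_k)] satisfy
   such an identity. Pairing against cubics with prescribed zeros rules out the
   configurations of the [a_k] in [P^1] one at a time: on at most four points one
   builds a cubic vanishing at all [a_k] with [p_2 != 0], contradicting [q = x^2 y];
   five points are excluded in the same spirit; six points force the [b_k] onto at
   most five points, excluded by symmetry. If the [a_k] are seven distinct points and
   so are the [b_k], the forms of bidegree (3, 1) vanishing at all pairs have
   dimension at least two and no [x^2 y] terms; the determinant of two independent
   ones is a sextic with seven distinct zeros, hence zero, and this produces a form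
   [A(x) l(y)] vanishing at all pairs with [A], [l] nonzero, which is impossible.
   Eight terms suffice by an explicit decomposition. *)

Definition ix : 'I_2 := ord0.
Definition iy : 'I_2 := ord_max.

Lemma ord2P (i : 'I_2) : i = ix \/ i = iy.
Proof. by case: i => [[|[|//]] Hi]; [left|right]; apply: val_inj. Qed.

Lemma mem_enum_small (T : finType) (S : {set T}) n x0 x : (#|S| <= n)%N -> x \in S ->
  exists2 t, (t < n)%N & x = nth x0 (enum S) t.
Proof.
move=> HS Hx; exists (index x (enum S)); last by rewrite nth_index ?mem_enum.
by apply: leq_trans HS; rewrite cardE index_mem mem_enum.
Qed.

Section BinaryForms.
Variable F : fieldType.
Local Notation vec := ('I_2 -> F).

Definition nonzero (u : vec) : bool := (u ix != 0) || (u iy != 0).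
Definition det2 (u v : vec) : F := u ix * v iy - u iy * v ix.
Definition collinear (u v : vec) : bool := det2 u v == 0.

Lemma collinear_refl u : collinear u u.
Proof. by rewrite /collinear /det2 mulrC subrr. Qed.

Lemma collinear_sym u v : collinear u v = collinear v u.
Proof. by rewrite /collinear /det2 -oppr_eq0 opprB [u ix * _]mulrC [u iy * _]mulrC. Qed.

Lemma collinear_scale u v : collinear u v -> nonzero v ->
  exists l, u ix = l * v ix /\ u iy = l * v iy.
Proof.
rewrite /collinear /det2 subr_eq0 => /eqP E; case/orP => Hv.
  exists (u ix / v ix); split; first by rewrite divfK.
  by apply: (mulIf Hv); rewrite mulrAC divfK // E.
exists (u iy / v iy); split; last by rewrite divfK.
by apply: (mulIf Hv); rewrite mulrAC divfK // -E.
Qed.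

Lemma collinear_trans v u w : nonzero v -> collinear u v -> collinear v w -> collinear u w.
Proof.
move=> Hv Huv; rewrite collinear_sym => Hwv; rewrite /collinear /det2.
have [l [-> ->]] := collinear_scale Huv Hv; have [m [-> ->]] := collinear_scale Hwv Hv.
by apply/eqP; ring.
Qed.

(** Binary cubics: [p 0 i] is the coefficient of [x^i y^(3-i)]. *)
Definition cubic_coef (p : 'rV[F]_4) (i : nat) : F := p 0 (inord i).

Definition monomial3 (i : 'I_4) (u : vec) : F := u ix ^+ i * u iy ^+ (3 - i).

Definition cubic_eval (p : 'rV[F]_4) (u : vec) : F :=
  \sum_(i < 4) cubic_coef p i * monomial3 i u.

Definition cubic (c0 c1 c2 c3 : F) : 'rV[F]_4 := \row_(i < 4) [:: c0; c1; c2; c3]`_i.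

Lemma cubic_evalE p u : cubic_eval p u =
  cubic_coef p 0 * u iy ^+ 3 + cubic_coef p 1 * u ix * u iy ^+ 2
  + cubic_coef p 2 * u ix ^+ 2 * u iy + cubic_coef p 3 * u ix ^+ 3.
Proof. by rewrite /cubic_eval /monomial3 4!big_ord_recl big_ord0 /bump /=; ring. Qed.

Lemma cubic_coef_cubic c0 c1 c2 c3 i : (i < 4)%N ->
  cubic_coef (cubic c0 c1 c2 c3) i = [:: c0; c1; c2; c3]`_i.
Proof. by move=> Hi; rewrite /cubic_coef mxE inordK. Qed.

Lemma cubic_eval_cubic c0 c1 c2 c3 u : cubic_eval (cubic c0 c1 c2 c3) u =
  c0 * u iy ^+ 3 + c1 * u ix * u iy ^+ 2 + c2 * u ix ^+ 2 * u iy + c3 * u ix ^+ 3.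
Proof. by rewrite cubic_evalE !cubic_coef_cubic. Qed.

Lemma cubic_coef_eq0 p :
  cubic_coef p 0 = 0 -> cubic_coef p 1 = 0 -> cubic_coef p 2 = 0 -> cubic_coef p 3 = 0 ->
  p = 0.
Proof.
move=> H0 H1 H2 H3; apply/rowP => i; rewrite mxE -(inord_val i).
by case: i => [[|[|[|[|//]]]] Hi].
Qed.

Lemma cubic_evalD p q u : cubic_eval (p + q) u = cubic_eval p u + cubic_eval q u.
Proof.
by rewrite /cubic_eval -big_split; apply: eq_bigr => i _; rewrite /cubic_coef mxE mulrDl.
Qed.

Lemma cubic_evalZ l p u : cubic_eval (l *: p) u = l * cubic_eval p u.
Proof. by rewrite /cubic_eval mulr_sumr; apply: eq_bigr => i _; rewrite /cubic_coef mxE -mulrA. Qed.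

Lemma cubic_evalB p q u : cubic_eval (p - q) u = cubic_eval p u - cubic_eval q u.
Proof. by rewrite cubic_evalD -scaleN1r cubic_evalZ mulN1r. Qed.

Lemma cubic_eval0 u : cubic_eval 0 u = 0.
Proof. by rewrite /cubic_eval big1 // => i _; rewrite /cubic_coef mxE mul0r. Qed.

Lemma cubic_eval_sum (I : finType) (P : {pred I}) (G : I -> 'rV[F]_4) u :
  cubic_eval (\sum_(i in P) G i) u = \sum_(i in P) cubic_eval (G i) u.
Proof.
exact: (big_morph (cubic_eval ^~ u) (fun p q => cubic_evalD p q u) (cubic_eval0 u)).
Qed.

Lemma cubic_eval_vec0 p (u : vec) : ~~ nonzero u -> cubic_eval p u = 0.
Proof.
rewrite /nonzero negb_or !negbK => /andP[/eqP H0 /eqP H1].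
by rewrite cubic_evalE H0 H1; ring.
Qed.

Lemma cubic_eval_collinear p u v : nonzero v -> collinear u v ->
  cubic_eval p v = 0 -> cubic_eval p u = 0.
Proof.
move=> Hv Huv Hp; have [l [Hx Hy]] := collinear_scale Huv Hv.
have -> : cubic_eval p u = l ^+ 3 * cubic_eval p v by rewrite !cubic_evalE Hx Hy; ring.
by rewrite Hp mulr0.
Qed.

Definition lform (l u : vec) : F := l ix * u ix + l iy * u iy.

(** [perp u] is both the linear form vanishing at [u] and the zero of the
   linear form [u]. *)
Definition perp (u : vec) : vec := fun i => if i == ix then u iy else - u ix.

Definition ex : vec := fun i => (i == ix)%:R.
Definition ey : vec := fun i => (i == iy)%:R.

Lemma lform_perp l u : lform (perp l) u = det2 u l.
Proof. by rewrite /lform /perp /det2 /=; ring. Qed.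

Lemma lform_eq0 l u : (lform l u == 0) = collinear u (perp l).
Proof.
by rewrite /collinear /det2 /lform /perp /= -oppr_eq0; congr (_ == 0); ring.
Qed.

Lemma nonzero_perp u : nonzero (perp u) = nonzero u.
Proof. by rewrite /nonzero /perp /= oppr_eq0 orbC. Qed.

Lemma lform_ex u : lform ex u = u ix.
Proof. by rewrite /lform /ex /=; ring. Qed.

Lemma lform_ey u : lform ey u = u iy.
Proof. by rewrite /lform /ey /=; ring. Qed.

Definition cubic_mul3 (l1 l2 l3 : vec) : 'rV[F]_4 :=
  cubic (l1 iy * l2 iy * l3 iy)
        (l1 ix * l2 iy * l3 iy + l1 iy * l2 ix * l3 iy + l1 iy * l2 iy * l3 ix)
        (l1 ix * l2 ix * l3 iy + l1 ix * l2 iy * l3 ix + l1 iy * l2 ix * l3 ix)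
        (l1 ix * l2 ix * l3 ix).

Lemma cubic_eval_mul3 l1 l2 l3 u :
  cubic_eval (cubic_mul3 l1 l2 l3) u = lform l1 u * lform l2 u * lform l3 u.
Proof. by rewrite cubic_eval_cubic /lform; ring. Qed.

Lemma cubic_coef2_mul3 l1 l2 l3 : cubic_coef (cubic_mul3 l1 l2 l3) 2 =
  l1 ix * l2 ix * l3 iy + l1 ix * l2 iy * l3 ix + l1 iy * l2 ix * l3 ix.
Proof. by rewrite cubic_coef_cubic. Qed.

Lemma cubic_eval_mul3_perp u l2 l3 : cubic_eval (cubic_mul3 (perp u) l2 l3) u = 0.
Proof.
by rewrite cubic_eval_mul3 lform_perp (eqP (collinear_refl u)) !mul0r.
Qed.

Lemma exists_cubic_coef2_vanishing1 u :
  exists2 q, cubic_coef q 2 != 0 & cubic_eval q u = 0.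
Proof.
have [Hu|Hu] := eqVneq (u iy) 0.
  exists (cubic 0 0 1 0); first by rewrite cubic_coef_cubic //= oner_neq0.
  by rewrite cubic_eval_cubic Hu; ring.
exists (cubic_mul3 (perp u) ex ey); last exact: cubic_eval_mul3_perp.
by rewrite cubic_coef2_mul3 /perp /ex /ey /=; rewrite !(mulr1, mulr0, addr0).
Qed.

Lemma exists_cubic_coef2_vanishing2 u v :
  exists q, [/\ cubic_coef q 2 != 0, cubic_eval q u = 0 & cubic_eval q v = 0].
Proof.
have [Huv|Huv] := boolP (collinear u v).
  have [Hu|Hu] := boolP (nonzero u).
    have [q Hq Hqu] := exists_cubic_coef2_vanishing1 u; exists q; split=> //.
    by apply: cubic_eval_collinear Hqu; rewrite // collinear_sym.
  have [q Hq Hqv] := exists_cubic_coef2_vanishing1 v.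
  by exists q; split=> //; apply: cubic_eval_vec0.
have vanish l : cubic_eval (cubic_mul3 (perp u) (perp v) l) u = 0 /\
                cubic_eval (cubic_mul3 (perp u) (perp v) l) v = 0.
  split; first exact: cubic_eval_mul3_perp.
  by rewrite cubic_eval_mul3 [lform (perp v) v]lform_perp (eqP (collinear_refl v)) mulr0 mul0r.
have [Hyy|Hyy] := eqVneq (u iy * v iy) 0.
- exists (cubic_mul3 (perp u) (perp v) ex); have [? ?] := vanish ex; split=> //.
  rewrite cubic_coef2_mul3 /perp /ex /= !(mulr1, mulr0, addr0, add0r).
  apply: contra Huv => /eqP Hs; rewrite /collinear /det2 -sqrf_eq0.
  (* the discriminant of [perp u * perp v] *)
  have -> : (u ix * v iy - u iy * v ix) ^+ 2 =
    (u iy * - v ix + - u ix * v iy) ^+ 2 - 4%:R * (u ix * v ix) * (u iy * v iy) by ring.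
  by rewrite Hs Hyy expr0n mulr0 subrr.
- exists (cubic_mul3 (perp u) (perp v) ey); have [? ?] := vanish ey; split=> //.
  by rewrite cubic_coef2_mul3 /perp /ey /= !(mulr1, mulr0, addr0, add0r).
Qed.

Lemma exists_cubic_coef2_vanishing_on (I : finType) (f : I -> vec) (S : {set I}) :
  (#|S| <= 2)%N -> exists2 q, cubic_coef q 2 != 0 & forall i, i \in S -> cubic_eval q (f i) = 0.
Proof.
move=> HS; set s := [seq f i | i <- enum S].
have [q [Hq H0 H1]] := exists_cubic_coef2_vanishing2 (nth ex s 0) (nth ex s 1).
exists q => // i Hi.
have Hidx : (index i (enum S) < 2)%N.
  by apply: leq_trans HS; rewrite cardE index_mem mem_enum.
have -> : f i = nth ex s (index i (enum S)).
  by rewrite (nth_map i) ?index_mem ?mem_enum // nth_index ?mem_enum.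
by case: (index i (enum S)) Hidx => [|[|//]].
Qed.

Lemma exists_lform_coef2_eq0 l1 l2 :
  exists2 l, nonzero l & cubic_coef (cubic_mul3 l1 l2 l) 2 = 0.
Proof.
set s := l1 ix * l2 ix; set t := l1 ix * l2 iy + l1 iy * l2 ix.
have E l : cubic_coef (cubic_mul3 l1 l2 l) 2 = s * l iy + t * l ix.
  by rewrite cubic_coef2_mul3 /s /t; ring.
have [/andP[Hs Ht]|Hst] := boolP ((s == 0) && (t == 0)).
  exists ex; first by rewrite /nonzero /ex /= oner_neq0.
  by rewrite E (eqP Hs) (eqP Ht); ring.
exists (fun i => if i == ix then s else - t).
  by rewrite /nonzero /= oppr_eq0 orbC -negb_and andbC.
by rewrite E /=; ring.
Qed.

Lemma exists_cubic_vanishing (I : finType) (f : I -> vec) (S : {set I}) t :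
  (#|S| <= 3)%N -> nonzero t -> (forall i, i \in S -> ~~ collinear t (f i)) ->
  exists2 p, (forall i, i \in S -> cubic_eval p (f i) = 0) & cubic_eval p t != 0.
Proof.
move=> HS Ht HSt.
pose l0 := if t ix != 0 then ex else ey.
pose ls := [seq perp (f i) | i <- enum S].
exists (cubic_mul3 (nth l0 ls 0) (nth l0 ls 1) (nth l0 ls 2)).
  move=> i Hi; rewrite cubic_eval_mul3.
  have Hidx : (index i (enum S) < 3)%N.
    by apply: leq_trans HS; rewrite cardE index_mem mem_enum.
  have : lform (nth l0 ls (index i (enum S))) (f i) = 0.
    rewrite (nth_map i) ?index_mem ?mem_enum // nth_index ?mem_enum //.
    by rewrite lform_perp; apply/eqP; exact: collinear_refl.
  by case: (index i (enum S)) Hidx => [|[|[|//]]] _ ->; rewrite ?(mulr0, mul0r).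
have nz_nth n : lform (nth l0 ls n) t != 0.
  have [Hn|Hn] := ltnP n (size ls).
    rewrite size_map in Hn.
    have [i0 _] : exists i0, i0 \in S.
      by apply/card_gt0P; rewrite cardE; exact: leq_ltn_trans (leq0n n) Hn.
    rewrite (nth_map i0) //.
    rewrite lform_perp; apply: HSt; rewrite -mem_enum; exact: mem_nth.
  rewrite nth_default // /l0; case: ifP => Hx; rewrite ?lform_ex ?lform_ey //.
  by move: Ht; rewrite /nonzero Hx.
by rewrite cubic_eval_mul3 !mulf_neq0.
Qed.

Lemma binary_form_dehomog (d : nat) (c : nat -> F) u : u iy != 0 ->
  \sum_(e < d.+1) c e * (u ix ^+ e * u iy ^+ (d - e))
  = u iy ^+ d * (\poly_(e < d.+1) c e).[u ix / u iy].
Proof.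
move=> Hu; rewrite horner_poly big_distrr; apply: eq_bigr => e _ /=.
have He : (e <= d)%N by rewrite -ltnS.
have -> : u iy ^+ d = u iy ^+ (d - e) * u iy ^+ e by rewrite -exprD subnK.
rewrite expr_div_n; field.
by rewrite expf_neq0.
Qed.

Lemma binary_form_eq0 (d n : nat) (c : nat -> F) (f : 'I_n -> vec) :
  (d < n)%N -> (forall i, nonzero (f i)) ->
  (forall i j, i != j -> ~~ collinear (f i) (f j)) ->
  (forall i, \sum_(e < d.+1) c e * (f i ix ^+ e * f i iy ^+ (d - e)) = 0) ->
  forall e, (e <= d)%N -> c e = 0.
Proof.
move=> Hdn Hnz Hnc Hz.
pose p : {poly F} := \poly_(e < d.+1) c e.
suff p0 : p = 0.
  by move=> e He; have := coef_poly d.+1 c e; rewrite -/p p0 coef0 ltnS He.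
pose P := [pred i | f i iy != 0].
have HinfP : (#|predC P| <= 1)%N.
  apply/card_le1_eqP => i j; rewrite !inE /= !negbK => /eqP Hi /eqP Hj.
  by apply/eqP/contraT => /Hnc; rewrite /collinear /det2 Hi Hj mulr0 mul0r subrr eqxx.
have HP : (#|P| + #|predC P| = n)%N by rewrite cardC card_ord.
pose rs := [seq f i ix / f i iy | i <- enum P].
have rs_uniq : uniq rs.
  rewrite map_inj_in_uniq ?enum_uniq // => i j; rewrite !mem_enum !inE /= => Hi Hj E.
  apply/eqP/contraT => /Hnc /negP[]; rewrite /collinear /det2.
  rewrite -(divfK Hi (f i ix)) -(divfK Hj (f j ix)) E; apply/eqP; ring.
have rs_root : all (root p) rs.
  apply/allP => x; case/mapP => i; rewrite mem_enum inE /= => Hi ->.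
  have := Hz i; rewrite binary_form_dehomog // => /eqP.
  by rewrite mulf_eq0 expf_eq0 (negbTE Hi) andbF.
(* a zero at infinity forces [c d = 0], i.e. the degree drops *)
have size_p : (size p + #|predC P| <= d.+1)%N.
  have [->|] := eqVneq #|predC P| 0%N; first by rewrite addn0 size_poly.
  rewrite -lt0n => /card_gt0P[i0]; rewrite !inE /= negbK => /eqP Hi0.
  have cd0 : c d = 0.
    have := Hz i0; rewrite big_ord_recr /= big1 ?add0r => [|e _]; last first.
      by rewrite Hi0 expr0n subn_eq0 leqNgt ltn_ord !mulr0.
    rewrite subnn expr0 mulr1 => /eqP; rewrite mulf_eq0 expf_eq0 orbC.
    have : f i0 ix != 0 by move: (Hnz i0); rewrite /nonzero Hi0 eqxx orbF.
    by move/negbTE => ->; rewrite andbF /= => /eqP.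
  have : (size p <= d)%N.
    apply/leq_sizeP => j Hj; rewrite coef_poly; case: ltnP => // Hjd.
    by have -> : j = d by apply/eqP; rewrite eqn_leq Hj -ltnS Hjd.
  by move=> Hsz; rewrite -addn1 leq_add.
apply/eqP; apply: contraT => Hp.
have := max_poly_roots Hp rs_root rs_uniq; rewrite size_map -cardE.
move=> Hlt; move: Hdn; rewrite -HP ltnNge => /negP[]; rewrite -ltnS.
by apply: leq_trans size_p; rewrite ltn_add2r.
Qed.

Lemma lform3_mul_eq0 (u0 u1 u2 w0 w1 w2 : F) :
  (forall y0 y1 y2, (u0 * y0 + u1 * y1 + u2 * y2) * (w0 * y0 + w1 * y1 + w2 * y2) = 0) ->
  (u0 = 0 /\ u1 = 0 /\ u2 = 0) \/ (w0 = 0 /\ w1 = 0 /\ w2 = 0).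
Proof.
move=> H.
have d0 : u0 * w0 = 0 by have := H 1 0 0; rewrite !(mulr1, mulr0, addr0).
have d1 : u1 * w1 = 0 by have := H 0 1 0; rewrite !(mulr1, mulr0, addr0, add0r).
have d2 : u2 * w2 = 0 by have := H 0 0 1; rewrite !(mulr1, mulr0, addr0, add0r).
have off (a b e g : F) : a * e = 0 -> b * g = 0 -> (a + b) * (e + g) = 0 -> a * g = 0.
  move=> Hae Hbg Hs; apply/eqP; rewrite -sqrf_eq0.
  have -> : (a * g) ^+ 2 = a * g * ((a + b) * (e + g)) - (a * e) * (b * g)
                           - (a * e) * (a * g) - (a * g) * (b * g) by ring.
  by rewrite Hs Hae Hbg !(mulr0, mul0r, subr0).
have H01 := H 1 1 0; have H02 := H 1 0 1; have H12 := H 0 1 1.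
rewrite !(mulr1, mulr0, addr0, add0r) in H01 H02 H12.
have o01 : u0 * w1 = 0 by apply: (off _ u1 w0) => //.
have o10 : u1 * w0 = 0 by apply: (off _ u0 w1) => //; rewrite addrC [w1 + _]addrC.
have o02 : u0 * w2 = 0 by apply: (off _ u2 w0) => //.
have o20 : u2 * w0 = 0 by apply: (off _ u0 w2) => //; rewrite addrC [w2 + _]addrC.
have o12 : u1 * w2 = 0 by apply: (off _ u2 w1) => //.
have o21 : u2 * w1 = 0 by apply: (off _ u1 w2) => //; rewrite addrC [w2 + _]addrC.
have kill (x y : F) : x != 0 -> x * y = 0 -> y = 0.
  by move=> Hx /eqP; rewrite mulf_eq0 (negbTE Hx) => /eqP.
have [U0|U0] := eqVneq u0 0; last by right; split; [|split]; exact: kill U0 _.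
have [U1|U1] := eqVneq u1 0; last by right; split; [|split]; exact: kill U1 _.
have [U2|U2] := eqVneq u2 0; last by right; split; [|split]; exact: kill U2 _.
by left.
Qed.

Lemma cross_eq0_scale (a0 a1 a3 b0 b1 b3 : F) : (a0 != 0) || (a1 != 0) || (a3 != 0) ->
  b1 * a3 - b3 * a1 = 0 -> b3 * a0 - b0 * a3 = 0 -> b0 * a1 - b1 * a0 = 0 ->
  exists l, [/\ b0 = l * a0, b1 = l * a1 & b3 = l * a3].
Proof.
move=> Ha /eqP; rewrite subr_eq0 => E1 /eqP; rewrite subr_eq0 => E2 /eqP.
rewrite subr_eq0 => E3.
have key (x y u v : F) : x != 0 -> u * x == v * y -> u = v / x * y.
  by move=> Hx /eqP H; apply: (mulIf Hx); rewrite H; field.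
case/orP: Ha => [/orP[]|] Ha.
- exists (b0 / a0); split; first by rewrite divfK.
  + by apply: key; rewrite // eq_sym.
  + exact: key.
- exists (b1 / a1); split; last 2 first.
  + by rewrite divfK.
  + by apply: key; rewrite // eq_sym.
  + exact: key.
- exists (b3 / a3); split; last by rewrite divfK.
  + by apply: key; rewrite // eq_sym.
  + exact: key.
Qed.

(** If [a ⊙ d = b ⊙ c] in [Sym^2 F^3] (coordinates indexed by 0, 1, 3) and
   [a != 0], then [b] or [c] is proportional to [a]. *)
Lemma symprod_proportional (a0 a1 a3 b0 b1 b3 c0 c1 c3 d0 d1 d3 : F) :
  (a0 != 0) || (a1 != 0) || (a3 != 0) ->
  a0 * d0 - b0 * c0 = 0 -> a0 * d1 + a1 * d0 - b0 * c1 - b1 * c0 = 0 ->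
  a1 * d1 - b1 * c1 = 0 -> a0 * d3 + a3 * d0 - b0 * c3 - b3 * c0 = 0 ->
  a1 * d3 + a3 * d1 - b1 * c3 - b3 * c1 = 0 -> a3 * d3 - b3 * c3 = 0 ->
  (exists l, [/\ b0 = l * a0, b1 = l * a1 & b3 = l * a3]) \/
  (exists l, [/\ c0 = l * a0, c1 = l * a1 & c3 = l * a3]).
Proof.
move=> Ha Z0 Z1 Z2 Z3 Z4 Z6.
(* evaluate the quadratic form of [a d^T + d a^T - b c^T - c b^T] at [a × y] *)
have key y0 y1 y2 :
    ((b1 * a3 - b3 * a1) * y0 + (b3 * a0 - b0 * a3) * y1 + (b0 * a1 - b1 * a0) * y2) *
    ((c1 * a3 - c3 * a1) * y0 + (c3 * a0 - c0 * a3) * y1 + (c0 * a1 - c1 * a0) * y2) = 0.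
  set z0 := a1 * y2 - a3 * y1; set z1 := a3 * y0 - a0 * y2; set z2 := a0 * y1 - a1 * y0.
  have -> : ((b1 * a3 - b3 * a1) * y0 + (b3 * a0 - b0 * a3) * y1 + (b0 * a1 - b1 * a0) * y2) *
    ((c1 * a3 - c3 * a1) * y0 + (c3 * a0 - c0 * a3) * y1 + (c0 * a1 - c1 * a0) * y2) =
    - ((a0 * d0 - b0 * c0) * z0 ^+ 2 + (a0 * d1 + a1 * d0 - b0 * c1 - b1 * c0) * z0 * z1
       + (a1 * d1 - b1 * c1) * z1 ^+ 2 + (a0 * d3 + a3 * d0 - b0 * c3 - b3 * c0) * z0 * z2
       + (a1 * d3 + a3 * d1 - b1 * c3 - b3 * c1) * z1 * z2 + (a3 * d3 - b3 * c3) * z2 ^+ 2).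
    by rewrite /z0 /z1 /z2; ring.
  by rewrite Z0 Z1 Z2 Z3 Z4 Z6 !mul0r !addr0 oppr0.
by case: (lform3_mul_eq0 key) => [[U1 [U2 U3]]|[W1 [W2 W3]]];
  [left | right]; exact: cross_eq0_scale.
Qed.

Lemma exists_left_kernel_neq0 m n (M : 'M[F]_(m, n)) : (n < m)%N ->
  exists2 x : 'rV[F]_m, x != 0 & x *m M = 0.
Proof.
move=> Hnm.
have Hk : kermx M != 0.
  rewrite -mxrank_eq0 mxrank_ker subn_eq0 -ltnNge.
  exact: leq_ltn_trans (rank_leq_col M) Hnm.
have [i Hi] : exists i, row i (kermx M) != 0.
  apply/existsP; apply: contraR Hk; rewrite negb_exists => /forallP H.
  by apply/eqP/row_matrixP => i; rewrite row0; exact/eqP/negPn/H.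
by exists (row i (kermx M)) => //; rewrite -row_mul mulmx_ker row0.
Qed.

Lemma exists_two_left_kernel m n (M : 'M[F]_(m, n)) : (n.+2 <= m)%N ->
  exists x1 x2 : 'rV[F]_m,
    [/\ x1 *m M = 0, x2 *m M = 0, x1 != 0 & forall l, x2 != l *: x1].
Proof.
move=> Hnm; have [x1 Hx1 Hx1M] := exists_left_kernel_neq0 M (ltnW Hnm).
have [j0 Hj0] : exists j0, x1 0 j0 != 0.
  apply/existsP; apply: contraR Hx1; rewrite negb_exists => /forallP H.
  by apply/eqP/rowP => j; rewrite mxE; exact/eqP/negPn/H.
(* the extra column forces [x2] to vanish at [j0] *)
pose E : 'M[F]_(m, 1) := \col_i (i == j0)%:R.
have Hnm1 : (n + 1 < m)%N by rewrite addn1.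
have [x2 Hx2] := exists_left_kernel_neq0 (row_mx M E) Hnm1.
rewrite mul_mx_row => /eqP; rewrite row_mx_eq0 => /andP[/eqP Hx2M /eqP Hx2E].
have Hx2j0 : x2 0 j0 = 0.
  move/matrixP: Hx2E => /(_ 0 0); rewrite !mxE (bigD1 j0) //= big1 ?addr0.
    by rewrite !mxE eqxx mulr1.
  by move=> i Hi; rewrite !mxE (negbTE Hi) mulr0.
exists x1, x2; split=> // l; apply: contra Hx2 => /eqP Ex2.
have /eqP : x2 0 j0 = l * x1 0 j0 by rewrite Ex2 mxE.
rewrite Hx2j0 eq_sym mulf_eq0 (negbTE Hj0) orbF => /eqP Hl.
by rewrite Ex2 Hl scale0r.
Qed.

Definition form31 (x : 'rV[F]_(4 + 4)) (u v : vec) : F :=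
  cubic_eval (lsubmx x) u * v iy + cubic_eval (rsubmx x) u * v ix.

Lemma form31B x1 x2 l u v :
  form31 (x2 - l *: x1) u v = form31 x2 u v - l * form31 x1 u v.
Proof. by rewrite /form31 !cubic_evalE /cubic_coef !mxE; ring. Qed.

Lemma form31_det x1 x2 u v : nonzero v -> form31 x1 u v = 0 -> form31 x2 u v = 0 ->
  cubic_eval (lsubmx x1) u * cubic_eval (rsubmx x2) u
  - cubic_eval (rsubmx x1) u * cubic_eval (lsubmx x2) u = 0.
Proof.
rewrite /form31 /nonzero; set A := cubic_eval _ u; set B := cubic_eval _ u.
set C := cubic_eval _ u; set D := cubic_eval _ u => Hv H1 H2.
have Ex : (A * D - B * C) * v ix = A * (C * v iy + D * v ix) - C * (A * v iy + B * v ix) by ring.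
have Ey : (A * D - B * C) * v iy = D * (A * v iy + B * v ix) - B * (C * v iy + D * v ix) by ring.
rewrite H1 H2 !mulr0 subrr in Ex Ey.
by case/orP: Hv => Hv; apply/eqP; rewrite -(mulIr_eq0 _ (rregP Hv)) ?Ex ?Ey.
Qed.

End BinaryForms.

Section Representatives.
Variables (F : fieldType) (m : nat) (L : pred 'I_m) (f : 'I_m -> 'I_2 -> F).
Hypothesis L_nonzero : forall k, L k -> nonzero (f k).

(** [reps] holds, for each point of [P^1] among the [f k] with [L k], its least
   index; [pclass r] is the class of such an index. *)
Definition reps : {set 'I_m} :=
  [set k | L k & [forall l : 'I_m, (l < k)%N && L l ==> ~~ collinear (f l) (f k)]].

Definition pclass (r : 'I_m) : {set 'I_m} := [set k | L k & collinear (f k) (f r)].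

Lemma reps_L r : r \in reps -> L r.
Proof. by rewrite inE => /andP[]. Qed.

Lemma pclass_self r : r \in reps -> r \in pclass r.
Proof. by move=> Hr; rewrite inE reps_L ?collinear_refl. Qed.

Lemma exists_rep k : L k -> exists2 r, r \in reps & k \in pclass r.
Proof.
move=> Hk.
have Pk : L k && collinear (f k) (f k) by rewrite Hk collinear_refl.
case: (@arg_minnP _ k (fun l => L l && collinear (f l) (f k)) val Pk) => r /andP[Hr Hrk] Hmin.
exists r; last by rewrite inE Hk collinear_sym.
rewrite inE Hr; apply/forallP => l; apply/implyP => /andP[Hlr Hl]; apply/negP => Hlr'.
have : (r <= l)%N.
  by apply: Hmin; rewrite Hl (collinear_trans (L_nonzero Hr)).
by rewrite leqNgt Hlr.
Qed.

Lemma reps_noncollinear r r' : r \in reps -> r' \in reps -> r != r' ->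
  ~~ collinear (f r) (f r').
Proof.
have lt_nc s s' : s \in reps -> s' \in reps -> (s' < s)%N -> ~~ collinear (f s) (f s').
  move=> Hs Hs' Hlt; move: Hs; rewrite inE => /andP[_ /forallP /(_ s')].
  by rewrite Hlt reps_L //= collinear_sym.
move=> Hr Hr' Hne; case: (ltngtP r r') => H.
- by rewrite collinear_sym lt_nc.
- exact: lt_nc.
- by move: Hne; rewrite (val_inj H) eqxx.
Qed.

Lemma pclass_uniq k r r' : r \in reps -> r' \in reps ->
  k \in pclass r -> k \in pclass r' -> r = r'.
Proof.
move=> Hr Hr'; rewrite !inE => /andP[Hk Hkr] /andP[_ Hkr']; apply/eqP/contraT => Hne.
have := reps_noncollinear Hr Hr' Hne.
by rewrite (collinear_trans (L_nonzero Hk)) // collinear_sym.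
Qed.

Lemma sum_card_pclass : (\sum_(r in reps) #|pclass r| <= m)%N.
Proof.
have -> : (\sum_(r in reps) #|pclass r| = \sum_(k < m) #|[set r in reps | k \in pclass r]|)%N.
  under eq_bigr => r _ do rewrite -sum1_card big_mkcond /=.
  rewrite exchange_big /=; apply: eq_bigr => k _.
  by rewrite -big_mkcondr -sum1_card; apply: eq_bigl => r; rewrite inE.
rewrite -[X in (_ <= X)%N]card_ord -sum1_card; apply: leq_sum => k _.
apply/card_le1_eqP => r r'; rewrite [r \in _]inE [r' \in _]inE.
move=> /andP[Hr Hkr] /andP[Hr' Hkr'].
exact: pclass_uniq Hr' Hr Hkr' Hkr.
Qed.

Definition large_reps t : {set 'I_m} := reps :&: [set r | t <= #|pclass r|]%N.
Definition small_reps t : {set 'I_m} := reps :\: [set r | t <= #|pclass r|]%N.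

Lemma large_repsE t r : r \in reps -> (r \in large_reps t) = (r \notin small_reps t).
Proof. by move=> Hr; rewrite in_setI in_setD Hr andbT negbK. Qed.

Lemma card_reps_split t : #|reps| = (#|large_reps t| + #|small_reps t|)%N.
Proof. by rewrite cardsID. Qed.

Lemma card_large_reps t : (0 < t)%N -> (t * #|large_reps t| + #|small_reps t| <= m)%N.
Proof.
move=> Ht; apply: leq_trans sum_card_pclass.
rewrite (big_setID [set r | t <= #|pclass r|]%N) /= -/(large_reps t) -/(small_reps t).
rewrite mulnC -sum_nat_const -sum1_card.
apply: leq_add; apply: leq_sum => r.
- by case/setIP=> _; rewrite inE.
- case/setDP=> Hr _; apply/card_gt0P; exists r; exact: pclass_self.
Qed.

Lemma pclass_singleton r k : r \in small_reps 2 -> k \in pclass r -> k = r.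
Proof.
case/setDP => Hr; rewrite inE -ltnNge ltnS => /card_le1_eqP H1 Hk.
exact: H1 r k (pclass_self Hr) Hk.
Qed.

Lemma cubic_eval_reps p (T : {set 'I_m}) k :
  (forall r, r \in reps -> r \notin T -> cubic_eval p (f r) = 0) ->
  L k -> (forall r, r \in T -> k \notin pclass r) -> cubic_eval p (f k) = 0.
Proof.
move=> Hp Hk HT; have [r Hr Hkr] := exists_rep Hk.
have HrT : r \notin T by apply: contraL Hkr => /HT.
move: Hkr; rewrite inE => /andP[_ Hkr].
exact: cubic_eval_collinear (L_nonzero (reps_L Hr)) Hkr (Hp r Hr HrT).
Qed.

Lemma card_reps_cover n (g : 'I_n -> 'I_2 -> F) :
  (forall k, L k -> exists2 t, nonzero (g t) & collinear (f k) (g t)) -> (#|reps| <= n)%N.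
Proof.
case: n => [|n] in g *; move=> Hcov.
  rewrite leqn0 cards_eq0; apply/eqP/setP => r; rewrite in_set0.
  by apply/negbTE/negP => /reps_L /Hcov [[]].
have /fin_all_exists[h Hh] k : exists t, L k -> nonzero (g t) && collinear (f k) (g t).
  have [Hk|_] := boolP (L k); last by exists ord0.
  by have [t Ht Hkt] := Hcov k Hk; exists t; rewrite Ht Hkt.
rewrite -(card_in_imset (f := h)); first by rewrite -[in X in (_ <= X)%N](card_ord n.+1) max_card.
move=> r r' Hr Hr' Ehr; apply/eqP/contraT => Hne.
have /andP[Hg Hr_h] := Hh r (reps_L Hr); have /andP[_ Hr'_h] := Hh r' (reps_L Hr').
have /negP[] := reps_noncollinear Hr Hr' Hne.
by rewrite (collinear_trans Hg Hr_h) // Ehr collinear_sym.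
Qed.

End Representatives.

(** The pairs [(a k, b k)] decompose [c (x^2 y ⊗ x^2 y)], seen as the bilinear
   form [(p, q) |-> c p_(x^2 y) q_(x^2 y)] on pairs of binary cubics. *)
Definition x2y_decomp (F : fieldType) n (c : F) (a b : 'I_n -> 'I_2 -> F) : Prop :=
  forall p q : 'rV[F]_4,
    \sum_(k < n) cubic_eval p (a k) * cubic_eval q (b k) = c * cubic_coef p 2 * cubic_coef q 2.

Section SevenTerms.
Variables (F : fieldType) (c : F) (a b : 'I_7 -> 'I_2 -> F).
Hypothesis c_neq0 : c != 0.
Hypothesis decomp : x2y_decomp c a b.

Definition live k := nonzero (a k) && nonzero (b k).

Lemma live_a k : live k -> nonzero (a k). Proof. by case/andP. Qed.
Lemma live_b k : live k -> nonzero (b k). Proof. by case/andP. Qed.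

Local Notation areps := (reps live a).
Local Notation aclass := (pclass live a).

Lemma dead_term p q k : ~~ live k -> cubic_eval p (a k) * cubic_eval q (b k) = 0.
Proof. by rewrite negb_and => /orP[] /cubic_eval_vec0 ->; rewrite (mul0r, mulr0). Qed.

Lemma decomp_single p q x :
  (forall k, live k -> k != x -> cubic_eval p (a k) * cubic_eval q (b k) = 0) ->
  cubic_eval p (a x) * cubic_eval q (b x) = c * cubic_coef p 2 * cubic_coef q 2.
Proof.
move=> H; rewrite -decomp (bigD1 x) //= big1 ?addr0 // => k Hkx.
by have [Hk|Hk] := boolP (live k); [exact: H | exact: dead_term].
Qed.

Lemma decomp_eq0 p q :
  (forall k, live k -> cubic_eval p (a k) * cubic_eval q (b k) = 0) ->
  cubic_coef p 2 * cubic_coef q 2 = 0.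
Proof.
move=> H; apply/eqP; rewrite -(mulrI_eq0 _ (lregP c_neq0)) mulrA -decomp big1 // => k _.
by have [Hk|Hk] := boolP (live k); [exact: H | exact: dead_term].
Qed.

Lemma coef2_eq0_vanishing p (S : {set 'I_7}) : (#|S| <= 2)%N ->
  (forall k, live k -> k \notin S -> cubic_eval p (a k) = 0) -> cubic_coef p 2 = 0.
Proof.
move=> HS Hp; have [q Hq HqS] := exists_cubic_coef2_vanishing_on b HS.
suff /eqP : cubic_coef p 2 * cubic_coef q 2 = 0.
  by rewrite mulf_eq0 (negbTE Hq) orbF => /eqP.
apply: decomp_eq0 => k Hk; have [HkS|HkS] := boolP (k \in S); first by rewrite HqS ?mulr0.
by rewrite Hp ?mul0r.
Qed.

Lemma card_areps_gt4 : (4 < #|areps|)%N.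
Proof.
rewrite ltnNge; apply/negP => Hle4.
have HB : (#|large_reps live a 3| <= 2)%N by have := card_large_reps live_a (isT : 0 < 3)%N; lia.
have [p0 Hp0 Hp0B] := exists_cubic_coef2_vanishing_on a HB.
have /fin_all_exists[pr Hpr] r : exists p : 'rV[F]_4, r \in areps ->
    (forall r', r' \in areps :\ r -> cubic_eval p (a r') = 0) /\ cubic_eval p (a r) != 0.
  have [Hr|] := boolP (r \in areps); last by exists 0.
  have HS : (#|areps :\ r| <= 3)%N by move: Hle4; rewrite (cardsD1 r) Hr.
  have Hnc r' : r' \in areps :\ r -> ~~ collinear (a r) (a r').
    by case/setD1P=> Hne Hr'; apply: (@reps_noncollinear _ _ live) => //; rewrite eq_sym.
  have [p Hp Hpr] := exists_cubic_vanishing HS (live_a (reps_L Hr)) Hnc.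
  by exists p.
have pr_coef2 r : r \in small_reps live a 3 -> cubic_coef (pr r) 2 = 0.
  case/setDP => Hr; rewrite inE -ltnNge ltnS => Hcard.
  apply: (coef2_eq0_vanishing Hcard) => k Hk Hkr.
  apply: (cubic_eval_reps live_a (T := [set r])) => // [r'|r'].
    by rewrite in_set1 => Hr' Hne; apply: (Hpr r Hr).1; rewrite in_setD1 Hne.
  by rewrite in_set1 => /eqP ->.
(* the [pr r] of small classes have no [x^2 y] term, so correcting [p0] by them keeps it *)
set ps := p0 - \sum_(r in small_reps live a 3)
                 (cubic_eval p0 (a r) / cubic_eval (pr r) (a r)) *: pr r.
have ps_reps r' : r' \in areps -> cubic_eval ps (a r') = 0.
  move=> Hr'; rewrite cubic_evalB cubic_eval_sum.
  have other r : r \in small_reps live a 3 -> r != r' ->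
      cubic_eval ((cubic_eval p0 (a r) / cubic_eval (pr r) (a r)) *: pr r) (a r') = 0.
    case/setDP=> Hr _ Hne; rewrite cubic_evalZ ((Hpr r Hr).1 r') ?mulr0 //.
    by rewrite in_setD1 eq_sym Hne.
  have [Hs|Hs] := boolP (r' \in small_reps live a 3).
    rewrite (bigD1 r') //= big1 => [|r /andP[Hr Hne]]; last exact: other.
    rewrite addr0 cubic_evalZ divfK ?subrr //.
    by case/setDP: Hs => Hs _; exact: (Hpr r' Hs).2.
  rewrite big1 => [|r Hr]; last by apply: other => //; apply: contraNneq Hs => <-.
  rewrite subr0 Hp0B // in_setI Hr' /=.
  by move: Hs; rewrite in_setD Hr' andbT negbK.
have ps_coef2 : cubic_coef ps 2 = cubic_coef p0 2.
  rewrite /cubic_coef !mxE summxE big1 ?oppr0 ?addr0 // => r Hr.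
  by rewrite mxE -/(cubic_coef _ 2) pr_coef2 // mulr0.
suff /eqP : cubic_coef ps 2 * cubic_coef (cubic 0 0 1 0) 2 = 0.
  by rewrite ps_coef2 mulf_eq0 (negbTE Hp0) cubic_coef_cubic //= oner_eq0.
apply: decomp_eq0 => k Hk; rewrite (cubic_eval_reps live_a (T := set0)) ?mul0r //.
  by move=> r Hr _; exact: ps_reps.
by move=> r; rewrite in_set0.
Qed.

Lemma exists_cubic_vanishing_off (T : {set 'I_7}) x :
  T \subset small_reps live a 2 -> x \in T -> (#|areps| <= #|T| + 3)%N ->
  exists2 p, (forall k, live k -> k \notin T -> cubic_eval p (a k) = 0)
           & cubic_eval p (a x) != 0.
Proof.
move=> /subsetP HT Hx Hcard.
have HTa : T \subset areps by apply/subsetP => r /HT /setDP[].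
have HS : (#|areps :\: T| <= 3)%N by rewrite cardsD (setIidPr HTa) leq_subLR.
have Hxa : x \in areps by move/subsetP: HTa; apply.
have Hnc r : r \in areps :\: T -> ~~ collinear (a x) (a r).
  case/setDP=> Hr HrT; apply: (@reps_noncollinear _ _ live) => //.
  by apply: contraNneq HrT => <-.
have [p Hp Hpx] := exists_cubic_vanishing HS (live_a (reps_L Hxa)) Hnc.
exists p => // k Hk HkT; apply: (cubic_eval_reps live_a (T := T)) => // [r Hr HrT|r HrT].
  by apply: Hp; rewrite in_setD HrT.
by apply: contraNN HkT => /(pclass_singleton (HT r HrT)) ->.
Qed.

Lemma card_areps_neq5 : #|areps| != 5%N.
Proof.
apply/eqP => H5.
have Hsplit := card_reps_split live a 2.
have Hlarge := card_large_reps live_a (isT : 0 < 2)%N.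
have [i Hi] : exists i, i \in small_reps live a 2 by apply/card_gt0P; lia.
have [qs Hqs Hqsi] := exists_cubic_coef2_vanishing1 (b i).
have qs_small x : x \in small_reps live a 2 -> cubic_eval qs (b x) = 0.
  move=> Hx; have [-> //|Hxi] := eqVneq x i.
  have [|||p Hp Hpx] := @exists_cubic_vanishing_off [set i; x] x.
  - by apply/subsetP => r; rewrite in_set2 => /orP[]/eqP->.
  - by rewrite in_set2 eqxx orbT.
  - by rewrite cards2 eq_sym Hxi H5.
  have Hp2 : cubic_coef p 2 = 0.
    by apply: (coef2_eq0_vanishing (S := [set i; x])) => //; rewrite cards2 ltnS leq_b1.
  suff /eqP : cubic_eval p (a x) * cubic_eval qs (b x) = 0.
    by rewrite mulf_eq0 (negbTE Hpx) => /eqP.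
  rewrite decomp_single ?Hp2 ?mulr0 ?mul0r // => k Hk Hkx.
  have [->|Hki] := eqVneq k i; first by rewrite Hqsi mulr0.
  by rewrite Hp ?mul0r // in_set2 negb_or Hki.
have HL : (#|large_reps live a 2| <= 2)%N by lia.
have [pp Hpp Hpp_large] := exists_cubic_coef2_vanishing_on a HL.
suff /eqP : cubic_coef pp 2 * cubic_coef qs 2 = 0.
  by rewrite mulf_eq0 (negbTE Hpp) (negbTE Hqs).
apply: decomp_eq0 => k Hk; have [r Hr Hkr] := exists_rep live_a Hk.
have [Hs|Hs] := boolP (r \in small_reps live a 2).
  by rewrite (pclass_singleton Hs Hkr) qs_small ?mulr0.
move: Hkr; rewrite inE => /andP[_ Hkr].
rewrite (cubic_eval_collinear (live_a (reps_L Hr)) Hkr) ?mul0r //.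
by rewrite Hpp_large // large_repsE.
Qed.

Lemma areps6_cover_b : #|areps| = 6%N ->
  exists g : 'I_5 -> 'I_2 -> F,
    forall k, live k -> exists2 t, nonzero (g t) & collinear (b k) (g t).
Proof.
move=> H6.
have Hsplit2 := card_reps_split live a 2; have Hsplit3 := card_reps_split live a 3.
have Hlarge2 := card_large_reps live_a (isT : 0 < 2)%N.
have Hlarge3 := card_large_reps live_a (isT : 0 < 3)%N.
have [i [j [Hi Hj Hij]]] : exists i j, [/\ i \in small_reps live a 2,
    j \in small_reps live a 2 & i != j] by apply/card_gt1P; lia.
have live_small x : x \in small_reps live a 2 -> live x by case/setDP => /reps_L.
have [m Hm Hq0] := exists_lform_coef2_eq0 (perp (b i)) (perp (b j)).
set q0 := cubic_mul3 (perp (b i)) (perp (b j)) m.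
have q0j : cubic_eval q0 (b j) = 0.
  by rewrite cubic_eval_mul3 [lform (perp (b j)) _]lform_perp (eqP (collinear_refl _)) mulr0 mul0r.
have q0_small x : x \in small_reps live a 2 -> x != i -> x != j -> cubic_eval q0 (b x) = 0.
  move=> Hx Hxi Hxj.
  have [|||p Hp Hpx] := @exists_cubic_vanishing_off (i |: [set j; x]) x.
  - by apply/subsetP => r; rewrite in_setU1 in_set2 => /orP[|/orP[]]/eqP->.
  - by rewrite in_setU1 in_set2 eqxx !orbT.
  - by rewrite H6 cardsU1 cards2 in_set2 negb_or Hij (eq_sym i) Hxi (eq_sym j) Hxj.
  suff /eqP : cubic_eval p (a x) * cubic_eval q0 (b x) = 0.
    by rewrite mulf_eq0 (negbTE Hpx) => /eqP.
  rewrite decomp_single ?Hq0 ?mulr0 // => k Hk Hkx.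
  have [->|Hki] := eqVneq k i; first by rewrite cubic_eval_mul3_perp mulr0.
  have [->|Hkj] := eqVneq k j; first by rewrite q0j mulr0.
  by rewrite Hp ?mul0r // in_setU1 in_set2 (negbTE Hki) (negbTE Hkj) (negbTE Hkx).
(* the only class with two elements, if any *)
set c0 := nth i (enum (large_reps live a 2)) 0.
set c1 := nth c0 (enum (aclass c0)) 0; set c2 := nth c0 (enum (aclass c0)) 1.
exists (fun t => nth (b i) [:: b i; b j; perp m; b c1; b c2] t) => k Hk.
have [r Hr Hkr] := exists_rep live_a Hk.
have [Hs|Hs] := boolP (r \in small_reps live a 2); last first.
  have Hr2 : r \in large_reps live a 2 by rewrite large_repsE.
  have HL1 : (#|large_reps live a 2| <= 1)%N by lia.
  have [t Ht Er] := mem_enum_small i HL1 Hr2.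
  have Hc0 : r = c0 by move: Ht Er; case: t => [|//] _.
  have Hcard : (#|aclass c0| <= 2)%N.
    rewrite -Hc0 leqNgt; apply/negP => H3.
    have : (0 < #|large_reps live a 3|)%N by apply/card_gt0P; exists r; rewrite in_setI Hr inE.
    lia.
  have Hkc0 : k \in aclass c0 by rewrite -Hc0.
  have [[|[|//]] _ Ek] := mem_enum_small c0 Hcard Hkc0.
  - by exists (inord 3); rewrite inordK //= /c1 -Ek ?live_b // collinear_refl.
  - by exists (inord 4); rewrite inordK //= /c2 -Ek ?live_b // collinear_refl.
rewrite (pclass_singleton Hs Hkr) in Hk *.
have [<-|Hri] := eqVneq r i.
  by exists (inord 0); rewrite inordK //= ?live_b ?collinear_refl.
have [<-|Hrj] := eqVneq r j.
  by exists (inord 1); rewrite inordK //= ?live_b ?collinear_refl.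
move: (q0_small r Hs Hri Hrj); rewrite cubic_eval_mul3 => /eqP.
rewrite !mulf_eq0 !lform_perp -!/(collinear _ _) lform_eq0 => /orP[/orP[Hc|Hc]|Hc].
- by exists (inord 0); rewrite inordK //= (live_b (live_small _ Hi)).
- by exists (inord 1); rewrite inordK //= (live_b (live_small _ Hj)).
- by exists (inord 2); rewrite inordK //= ?nonzero_perp.
Qed.

Lemma form31_sum x : \sum_(k < 7) b k iy ^+ 2 * form31 x (a k) (b k) = 0.
Proof.
transitivity (\sum_(k < 7) cubic_eval (lsubmx x) (a k) * cubic_eval (cubic 1 0 0 0) (b k)
            + \sum_(k < 7) cubic_eval (rsubmx x) (a k) * cubic_eval (cubic 0 1 0 0) (b k)).
  by rewrite -big_split; apply: eq_bigr => k _; rewrite /form31 !cubic_eval_cubic /=; ring.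
by rewrite !decomp !cubic_coef_cubic //=; ring.
Qed.

Lemma form31_coef2 x : (forall k, form31 x (a k) (b k) = 0) ->
  cubic_coef (lsubmx x) 2 = 0 /\ cubic_coef (rsubmx x) 2 = 0.
Proof.
move=> Hx; set A := lsubmx x; set B := rsubmx x.
have sum0 (w : 'I_7 -> F) : \sum_(k < 7) w k * form31 x (a k) (b k) = 0.
  by rewrite big1 // => k _; rewrite Hx mulr0.
have EA : \sum_(k < 7) b k ix ^+ 2 * form31 x (a k) (b k) = c * cubic_coef A 2.
  transitivity (\sum_(k < 7) cubic_eval A (a k) * cubic_eval (cubic 0 0 1 0) (b k)
              + \sum_(k < 7) cubic_eval B (a k) * cubic_eval (cubic 0 0 0 1) (b k)).
    by rewrite -big_split; apply: eq_bigr => k _; rewrite /form31 !cubic_eval_cubic /=; ring.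
  by rewrite !decomp !cubic_coef_cubic //=; ring.
have EB : \sum_(k < 7) (b k ix * b k iy) * form31 x (a k) (b k) = c * cubic_coef B 2.
  transitivity (\sum_(k < 7) cubic_eval A (a k) * cubic_eval (cubic 0 1 0 0) (b k)
              + \sum_(k < 7) cubic_eval B (a k) * cubic_eval (cubic 0 0 1 0) (b k)).
    by rewrite -big_split; apply: eq_bigr => k _; rewrite /form31 !cubic_eval_cubic /=; ring.
  by rewrite !decomp !cubic_coef_cubic //=; ring.
rewrite sum0 in EA; rewrite sum0 in EB.
by split; apply/eqP; rewrite -(mulrI_eq0 _ (lregP c_neq0)) -?EA -?EB.
Qed.

Section Generic.
Hypotheses (a_nc : forall k l, k != l -> ~~ collinear (a k) (a l))
           (b_nc : forall k l, k != l -> ~~ collinear (b k) (b l))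
           (all_live : forall k, live k).

Lemma product_form_false X l : X != 0 -> nonzero l ->
  (forall k, cubic_eval X (a k) * lform l (b k) = 0) -> False.
Proof.
move=> HX Hl HXl.
have [k1 Hk1] : exists k1, forall k, k != k1 -> lform l (b k) != 0.
  case: (pickP (fun k => lform l (b k) == 0)) => [k1 Hk1|H0]; last first.
    by exists ord0 => k _; rewrite H0.
  exists k1 => k Hkk1; apply/negP => Hk; have := b_nc Hkk1.
  rewrite lform_eq0 in Hk; rewrite lform_eq0 in Hk1.
  by rewrite (collinear_trans _ Hk) ?nonzero_perp // collinear_sym.
have Z : forall e, (e <= 3)%N -> cubic_coef X e = 0.
  apply: (@binary_form_eq0 _ 3 6 _ (fun j => a (lift k1 j))) => //.
  - by move=> j; exact: live_a.
  - by move=> i j Hij; apply: a_nc; rewrite (inj_eq lift_inj).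
  - move=> j; have /eqP := HXl (lift k1 j).
    rewrite mulf_eq0 (negbTE (Hk1 _ _)) ?orbF; first by move/eqP.
    by rewrite eq_sym neq_lift.
by move/negP: HX; apply; apply/eqP/cubic_coef_eq0; apply: Z.
Qed.

Lemma exists_two_form31 : exists x1 x2 : 'rV[F]_(4 + 4),
  [/\ forall k, form31 x1 (a k) (b k) = 0, forall k, form31 x2 (a k) (b k) = 0,
      x1 != 0 & forall l, x2 != l *: x1].
Proof.
have [k0 Hk0] : exists k0, b k0 iy != 0.
  have [H0|] := eqVneq (b ord0 iy) 0; last by exists ord0.
  have [H1|] := eqVneq (b (lift ord0 ord0) iy) 0; last by exists (lift ord0 ord0).
  by have := b_nc (neq_lift ord0 ord0); rewrite /collinear /det2 H0 H1 mulr0 mul0r subrr eqxx.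
pose M : 'M[F]_(4 + 4, 6) := col_mx
  (\matrix_(i, j) (monomial3 i (a (lift k0 j)) * b (lift k0 j) iy))
  (\matrix_(i, j) (monomial3 i (a (lift k0 j)) * b (lift k0 j) ix)).
have ME x j : (x *m M) 0 j = form31 x (a (lift k0 j)) (b (lift k0 j)).
  rewrite -{1}(hsubmxK x) mul_row_col mxE !mxE /form31 /cubic_eval !big_distrl /=.
  by congr (_ + _); apply: eq_bigr => i _; rewrite /cubic_coef !mxE inord_val mulrA.
(* by [form31_sum], vanishing at the six pairs [k != k0] forces vanishing at [k0] *)
have vanish x : x *m M = 0 -> forall k, form31 x (a k) (b k) = 0.
  move=> Hx; have Hl j : form31 x (a (lift k0 j)) (b (lift k0 j)) = 0 by rewrite -ME Hx mxE.
  move=> k; case: (unliftP k0 k) => [j ->|->]; first exact: Hl.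
  have := form31_sum x; rewrite (bigD1 k0) //= big1 ?addr0 => [/eqP|k' Hk'].
    by rewrite mulf_eq0 expf_eq0 (negbTE Hk0) /= => /eqP.
  by case: (unliftP k0 k') Hk' => [j ->|->]; rewrite ?eqxx // Hl mulr0.
have [x1 [x2 [Hx1 Hx2 Hx1nz Hx2x1]]] := exists_two_left_kernel M (isT : 6 < 4 + 4)%N.
by exists x1, x2; split=> //; apply: vanish.
Qed.

Lemma form31_lsubmx0_false x : x != 0 -> lsubmx x = 0 ->
  (forall k, form31 x (a k) (b k) = 0) -> False.
Proof.
move=> Hx HA Hform; apply: (@product_form_false (rsubmx x) (ex F)).
- by apply: contra Hx => /eqP HB; rewrite -[x]hsubmxK HA HB row_mx0.
- by rewrite /nonzero /ex /= oner_neq0.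
- by move=> k; rewrite lform_ex -[RHS](Hform k) /form31 HA cubic_eval0 mul0r add0r.
Qed.

Lemma distinct_points_false : False.
Proof.
have [x1 [x2 [H1 H2 Hx1 Hx21]]] := exists_two_form31.
have [A2 B2] := form31_coef2 H1; have [C2 D2] := form31_coef2 H2.
set cA := cubic_coef (lsubmx x1) in A2; set cB := cubic_coef (rsubmx x1) in B2.
set cC := cubic_coef (lsubmx x2) in C2; set cD := cubic_coef (rsubmx x2) in D2.
(* the sextic [A D - B C] vanishes at the seven distinct points [a k] *)
pose cd := nth 0 [:: cA 0 * cD 0 - cB 0 * cC 0;
                     cA 0 * cD 1 + cA 1 * cD 0 - cB 0 * cC 1 - cB 1 * cC 0;
                     cA 1 * cD 1 - cB 1 * cC 1;
                     cA 0 * cD 3 + cA 3 * cD 0 - cB 0 * cC 3 - cB 3 * cC 0;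
                     cA 1 * cD 3 + cA 3 * cD 1 - cB 1 * cC 3 - cB 3 * cC 1; 0;
                     cA 3 * cD 3 - cB 3 * cC 3].
have Z : forall e, (e <= 6)%N -> cd e = 0.
  apply: (@binary_form_eq0 _ 6 7 cd a) => // [k|k]; first exact: live_a.
  rewrite -[RHS](form31_det (live_b (all_live k)) (H1 k) (H2 k)) !cubic_evalE.
  by rewrite /cd -/cA -/cB -/cC -/cD A2 B2 C2 D2 !big_ord_recr big_ord0 /=; ring.
have [HA|HA] := boolP ((cA 0 != 0) || (cA 1 != 0) || (cA 3 != 0)); last first.
  move: HA; rewrite !negb_or !negbK => /andP[/andP[/eqP A0 /eqP A1] /eqP A3].
  exact: (form31_lsubmx0_false Hx1 (cubic_coef_eq0 A0 A1 A2 A3)).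
case: (symprod_proportional HA (Z 0 isT) (Z 1 isT) (Z 2 isT) (Z 3 isT) (Z 4 isT) (Z 6 isT))
  => [][l [E0 E1 E3]].
- apply: (@product_form_false (lsubmx x1) (fun i => if i == ix then l else 1)).
  + by apply/eqP => A0; move: HA; rewrite /cA A0 /cubic_coef !mxE eqxx.
  + by rewrite /nonzero /= oner_neq0 orbT.
  + move=> k; rewrite -[RHS](H1 k) /form31 /lform /= !cubic_evalE.
    by rewrite -/cA -/cB E0 E1 E3 A2 B2; ring.
- apply: (form31_lsubmx0_false (x := x2 - l *: x1)).
  + by rewrite subr_eq0 Hx21.
  + have coefE i : cubic_coef (lsubmx (x2 - l *: x1)) i = cC i - l * cA i.
      by rewrite /cC /cA /cubic_coef !mxE.
    by apply: cubic_coef_eq0; rewrite coefE ?E0 ?E1 ?E3 ?A2 ?C2 ?mulr0 subrr.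
  + by move=> k; rewrite form31B H1 H2 mulr0 subr0.
Qed.

End Generic.

End SevenTerms.

Lemma x2y_decomp_swap (F : fieldType) n (c : F) (a b : 'I_n -> 'I_2 -> F) :
  x2y_decomp c a b -> x2y_decomp c b a.
Proof.
by move=> Hab p q; under eq_bigr do rewrite mulrC; rewrite Hab mulrAC.
Qed.

Lemma x2y_decomp_pad (F : fieldType) s (c : F) (v w : 'I_s -> 'I_2 -> F) :
  (s <= 7)%N -> x2y_decomp c v w -> exists a b : 'I_7 -> 'I_2 -> F, x2y_decomp c a b.
Proof.
move=> Hs Hvw.
pose ext (u : 'I_s -> 'I_2 -> F) (n : nat) :=
  if (insub n : option 'I_s) is Some i then u i else fun=> 0.
exists (fun k => ext v k), (fun k => ext w k) => p q.
pose G (n : nat) := cubic_eval p (ext v n) * cubic_eval q (ext w n).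
change (\sum_(k < 7) G k = c * cubic_coef p 2 * cubic_coef q 2).
rewrite -(Hvw p q) [RHS](eq_bigr (G \o val)) => [|k _]; last by rewrite /G /ext /= valK.
rewrite (big_ord_widen 7 G Hs) [RHS]big_mkcond /=; apply: eq_bigr => k _.
case: ifP => // Hk; rewrite /G /ext insubF ?Hk // cubic_eval_vec0 ?mul0r //.
by rewrite /nonzero !eqxx.
Qed.

Lemma card_areps_le6_false (F : fieldType) (c : F) (a b : 'I_7 -> 'I_2 -> F) :
  c != 0 -> x2y_decomp c a b -> (#|reps (live a b) a| <= 6)%N -> False.
Proof.
move=> Hc Hab H6; have Hba := x2y_decomp_swap Hab.
have := card_areps_gt4 Hc Hab; have := card_areps_neq5 Hc Hab.
have [H6'|] := eqVneq #|reps (live a b) a| 6%N; last by lia.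
have [g Hg] := areps6_cover_b Hc Hab H6'.
have : (#|reps (live b a) b| <= 5)%N.
  by apply: (card_reps_cover (g := g)) => k Hk; apply: Hg; rewrite /live andbC.
by have := card_areps_gt4 Hc Hba; have := card_areps_neq5 Hc Hba; lia.
Qed.

Lemma x2y_decomp7_false (F : fieldType) (c : F) (a b : 'I_7 -> 'I_2 -> F) :
  c != 0 -> ~ x2y_decomp c a b.
Proof.
move=> Hc Hab; have Hba := x2y_decomp_swap Hab.
have reps_full (L : pred 'I_7) (f : 'I_7 -> 'I_2 -> F) :
    (6 < #|reps L f|)%N -> forall k, k \in reps L f.
  move=> H k; suff -> : reps L f = setT by rewrite inE.
  by apply/eqP; rewrite eqEcard subsetT cardsT card_ord.
have [H6|/reps_full Ha] := leqP #|reps (live a b) a| 6.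
  exact: card_areps_le6_false Hc Hab H6.
have [H6|/reps_full Hb] := leqP #|reps (live b a) b| 6.
  exact: card_areps_le6_false Hc Hba H6.
apply: (distinct_points_false Hc Hab) => [k l|k l|k]; last exact: reps_L (Ha k).
- exact: reps_noncollinear.
- exact: reps_noncollinear.
Qed.

HB.instance Definition _ := Num.ClosedField.on C.

Definition mon_index (i : 'I_4) (n : nat) : 'I_2 := if (n < i)%N then ix else iy.

Lemma pure_mon_index (i : 'I_4) (v : vec2) :
  v (mon_index i 0) * v (mon_index i 1) * v (mon_index i 2) = monomial3 i v.
Proof. by rewrite /mon_index /monomial3; case: i => [[|[|[|[|//]]]] Hi] /=; ring. Qed.

Lemma W3_mon_index (i : 'I_4) :
  W3 (mon_index i 0) (mon_index i 1) (mon_index i 2) = if i == 2 :> nat then 3%:R^-1 else 0.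
Proof. by rewrite /W3 /mon_index; case: i => [[|[|[|[|//]]]] Hi]. Qed.

Lemma x2y_decomp_of_ps_decomp r : has_ps_decomp W3W3 r ->
  exists v w : 'I_r -> vec2, x2y_decomp 9%:R^-1 v w.
Proof.
move=> [v [w Hdec]]; exists v, w => p q.
have Hmon (i j : 'I_4) : \sum_(k < r) monomial3 i (v k) * monomial3 j (w k) =
    if (i == 2 :> nat) && (j == 2 :> nat) then 9%:R^-1 else 0.
  have := Hdec (mon_index i 0) (mon_index i 1) (mon_index i 2)
               (mon_index j 0) (mon_index j 1) (mon_index j 2).
  rewrite /W3W3 !W3_mon_index /pure33; under eq_bigr do rewrite !pure_mon_index.
  move=> <-; case: (i == 2 :> nat); case: (j == 2 :> nat); rewrite ?(mul0r, mulr0) //.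
  by rewrite -invfM -natrM.
rewrite /cubic_eval.
transitivity (\sum_(i < 4) \sum_(j < 4) cubic_coef p i * cubic_coef q j *
  \sum_(k < r) monomial3 i (v k) * monomial3 j (w k)).
  under eq_bigr do rewrite big_distrl /=.
  rewrite exchange_big /=; apply: eq_bigr => i _.
  under eq_bigr do rewrite big_distrr /=.
  rewrite exchange_big /=; apply: eq_bigr => j _.
  by rewrite big_distrr /=; apply: eq_bigr => k _; ring.
under eq_bigr do under eq_bigr do rewrite Hmon.
have inord2 (i : 'I_4) : (i == 2 :> nat) = (i == inord 2).
  by rewrite -(inj_eq val_inj) /= inordK.
rewrite (bigD1 (inord 2)) //= [X in _ + X]big1 ?addr0 => [|i Hi]; last first.
  by apply: big1 => j _; rewrite inord2 (negbTE Hi) mulr0.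
rewrite (bigD1 (inord 2)) //= [X in _ + X]big1 ?addr0 => [|j Hj]; last first.
  by rewrite !inord2 (negbTE Hj) andbF mulr0.
by rewrite !inord2 eqxx /= inordK //; ring.
Qed.

Definition vec_of (s t : C) : vec2 := fun i => if i == ix then s else t.

(** [x^2 y ⊗ x^2 y = (3x^2y + y^3) ⊗ (3x^2y + 25y^3) / 9 - y^3 ⊗ x^2y / 3
   - 25 x^2y ⊗ y^3 / 3 - 25 y^3 ⊗ y^3 / 9], and [2 (3x^2y + y^3)],
   [10 (3x^2y + 25y^3)], [24x^2y + 128y^3] and [450x^2y + 54y^3] are the
   differences of cubes [(x ± y)^3], [(x ± 5y)^3], [(x ± 4y)^3], [(5x ± 3y)^3]. *)
Definition upper_coef (k : 'I_8) : C :=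
  [:: 180%:R^-1; - 180%:R^-1; - 180%:R^-1; 180%:R^-1;
      - 72%:R^-1; 72%:R^-1; - 54%:R^-1; 54%:R^-1]`_k.
Definition upper_left (k : 'I_8) : vec2 :=
  nth (vec_of 0 0) [:: vec_of 1 1; vec_of 1 1; vec_of 1 (-1); vec_of 1 (-1);
                       vec_of 0 1; vec_of 0 1; vec_of 5%:R 3%:R; vec_of 5%:R (- 3%:R)] k.
Definition upper_right (k : 'I_8) : vec2 :=
  nth (vec_of 0 0) [:: vec_of 1 5%:R; vec_of 1 (- 5%:R); vec_of 1 5%:R; vec_of 1 (- 5%:R);
                       vec_of 1 4%:R; vec_of 1 (- 4%:R); vec_of 0 1; vec_of 0 1] k.

Lemma W3W3_ps_decomp8 : has_ps_decomp W3W3 8.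
Proof.
exists (fun k i => 3.-root (upper_coef k) * upper_left k i), upper_right.
move=> i1 i2 i3 j1 j2 j3.
have pure k : pure33 (fun i => 3.-root (upper_coef k) * upper_left k i) (upper_right k)
                    i1 i2 i3 j1 j2 j3 =
    upper_coef k * (upper_left k i1 * upper_left k i2 * upper_left k i3)
                 * (upper_right k j1 * upper_right k j2 * upper_right k j3).
  by rewrite /pure33 -[upper_coef k in RHS](rootCK (isT : 0 < 3)%N); ring.
under eq_bigr do rewrite pure.
rewrite !big_ord_recr big_ord0 /= /W3W3 /W3.
case: (ord2P i1) => ->; case: (ord2P i2) => ->; case: (ord2P i3) => ->;
case: (ord2P j1) => ->; case: (ord2P j2) => ->; case: (ord2P j3) => ->;
rewrite /upper_coef /upper_left /upper_right /vec_of /=; field; by rewrite ?pnatr_eq0.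
Qed.

Local Close Scope ring_scope.

Theorem proposition4p2 : ps_rank_is W3W3 8.
Proof.
split; first exact: W3W3_ps_decomp8.
move=> s /x2y_decomp_of_ps_decomp[v [w Hvw]]; rewrite leqNgt; apply/negP => Hs.
have [a [b Hab]] := x2y_decomp_pad Hs Hvw.
by apply: (x2y_decomp7_false _ Hab); rewrite invr_eq0 pnatr_eq0.
Qed.
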